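(* Under either the overlap preference model or the cost preference model, for no $k\in\mathbb{N}$ is the pair $\langle R,F\rangle$ U-FSSP-A, where $R$ is the $k$-equal-representation shortlisting rule and $F$ is either the greedy-approval rule or the approval-maximising rule.
   Context: Throughout, $\mathbb{N}=\{1,2,3,\dots\}$. Let $\mathbb{P}=\{p_1,\dots,p_m\}$ be a finite set of projects, $c:\mathbb{P}\to\mathbb{N}$ a cost function with $c(P)=\sum_{p\in P}c(p)$, $B\in\mathbb{N}$ a budget with $c(p)\le B$ for all $p$; agents $\mathcal{N}=\{1,\dots,n\}$. Tie-breaking: for nonempty $P\subseteq\mathbb{P}$, $T(P)$ is its lowest-index project; for a nonempty family $\mathfrak{P}$ of subsets of $\mathbb{P}$, $T(\mathfrak{P})$ is the unique $P\in\mathfrak{P}$ such that for all $P'\in\mathfrak{P}\setminus\{P\}$ the lowest-index project of $(P\setminus P')\cup(P'\setminus P)$ lies in $P$; for a weak order $\ge$ on $\mathbb{P}$, $T(\ge)$ is the strict order obtained by ordering each indifference class by increasing index. Greedy selection $\mathit{GREED}(P,\gg)$, for $P\subseteq\mathbb{P}$ and a strict linear order $\gg$ on $P$, examines projects in the order $\gg$ and selects a project iff doing so keeps the total cost of selected projects at most $B$. Shortlisting stage: shortlisting instance $I=\langle\mathbb{P},c,B\rangle$; shortlisting profile $\boldsymbol{P}=(P_1,\dots,P_n)$, $P_i\subseteq\mathbb{P}$, $\bigcup\boldsymbol{P}=P_1\cup\dots\cup P_n$; $(\boldsymbol{P}_{-i},P_i')$ replaces $P_i$ by $P_i'$. The $k$-equal-representation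 shortlisting rule returns $R(I,\boldsymbol{P})=T\big(\operatorname*{argmax}_{P\subseteq\bigcup\boldsymbol{P},\ c(P)\le kB}\sum_{i\in\mathcal{N}}\sum_{\ell=0}^{|P_i\cap P|}n^{-\ell}\big)$. Each agent $i$ has an awareness set $C_i\subseteq\mathbb{P}$; $\boldsymbol{C}=(C_1,\dots,C_n)$. Allocation stage: allocation instance $I=\langle\mathcal{P},c,B\rangle$, $\mathcal{P}\subseteq\mathbb{P}$; profile $\boldsymbol{A}=(A_1,\dots,A_n)$, $A_i\subseteq\mathcal{P}$; $n_p^{\boldsymbol{A}}=|\{i:p\in A_i\}|$; $p\ge_{\mathit{app}}^{\boldsymbol{A}}p'$ iff $n_p^{\boldsymbol{A}}\ge n_{p'}^{\boldsymbol{A}}$; $\mathcal{A}(I)$ is the set of $A\subseteq\mathcal{P}$ with $c(A)\le B$. Greedy-approval rule: $F(I,\boldsymbol{A})=\mathit{GREED}(\mathcal{P},T(\ge_{\mathit{app}}^{\boldsymbol{A}}))$. Approval-maximising rule: $F(I,\boldsymbol{A})=T(\operatorname*{argmax}_{A\in\mathcal{A}(I)}\sum_{p\in A}n_p^{\boldsymbol{A}})$. Preferences: each agent $i$ has a strict linear order $\rhd_i$ on $\mathbb{P}$; $\mathit{top}_i(\mathcal{P})=\mathit{GREED}(\mathcal{P},\rhd_i|_{\mathcal{P}})$, $\boldsymbol{top}(\mathcal{P})=(\mathit{top}_1(\mathcal{P}),\dots,\mathit{top}_n(\mathcal{P}))$. For $P\subseteq\mathbb{P}$: overlap model $A\succeq_P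 A'$ iff $|A\cap P|\ge|A'\cap P|$; cost model $A\succeq_P A'$ iff $c(A\cap P)\ge c(A'\cap P)$; $\succ_P$ its strict part. $\mathit{best}(\succ,\mathfrak{P})$ is the set of elements of $\mathfrak{P}$ undominated w.r.t. $\succ$. Best response: for $I=\langle\mathcal{P},c,B\rangle$, profile $\boldsymbol{A}$, agent $i$: $A_i^\star(I,\boldsymbol{A})=T(\mathit{best}(\succ_{\mathit{top}_i(\mathcal{P})},\{F(I,(\boldsymbol{A}_{-i},A_i'))\mid A_i'\subseteq\mathcal{P}\}))$ and $F^\star(I,\boldsymbol{A})=F(I,(\boldsymbol{A}_{-i},A_i^\star(I,\boldsymbol{A})))$. Anticipative manipulation: given $R,F$, shortlisting instance $I_1$, profile $\boldsymbol{P}$, agent $i$, $P_i'\subseteq\mathbb{P}$, let $\mathcal{P}=R(I_1,\boldsymbol{P})$, $\mathcal{P}'=R(I_1,(\boldsymbol{P}_{-i},P_i'))$, $I_2=\langle\mathcal{P},c,B\rangle$, $I_2'=\langle\mathcal{P}',c,B\rangle$, $Q=\mathit{top}_i(\mathcal{P}\cup\mathcal{P}')$. $P_i'$ is a successful anticipative manipulation if $F^\star(I_2',\boldsymbol{top}(\mathcal{P}'))\succ_Q F^\star(I_2,\boldsymbol{top}(\mathcal{P}))$. U-FSSP-A: for a preference model, $\langle R,F\rangle$ is U-FSSP-A if for every shortlisting instance, awareness profile $\boldsymbol{C}$, shortlisting profile $\boldsymbol{P}$ with $P_{i'}\subseteq C_{i'}$ for all $i'$, and agent $i$, there is no $P_i'\subseteq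 C_i\cup\bigcup\boldsymbol{P}$ such that submitting $P_i'$ instead of $\mathit{top}_i(C_i\cup\bigcup\boldsymbol{P})$ (i.e., going from $(\boldsymbol{P}_{-i},\mathit{top}_i(C_i\cup\bigcup\boldsymbol{P}))$ to $(\boldsymbol{P}_{-i},P_i')$) is a successful anticipative manipulation for $i$. *)

From mathcomp Require Import all_boot all_order all_algebra all_fingroup.

Set Implicit Arguments.
Unset Strict Implicit.
Unset Printing Implicit Defensive.

(* Projects are 'I_m (index = position in the tie-breaking order p_1,...,p_m),
   agents are 'I_n.  Costs c : 'I_m -> nat, budget B. *)

Definition cost {m : nat} (c : 'I_m -> nat) (S : {set 'I_m}) : nat :=
  \sum_(p in S) c p.

Definition greedy {m : nat} (c : 'I_m -> nat) (B : nat) (s : seq 'I_m)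
  : {set 'I_m} :=
  foldl (fun S p => if cost c S + c p <= B then p |: S else S) set0 s.

Definition lowest_in {m : nat} (x : 'I_m) (D : {set 'I_m}) : bool :=
  (x \in D) && [forall y in D, (x <= y)%N].

(* Tie-breaking T on a (nonempty) family of sets of projects:
   the unique P such that for all other P' the lowest-index project of the
   symmetric difference lies in P  (default set0 if none exists). *)
Definition tb_family {m : nat} (fam : {set {set 'I_m}}) : {set 'I_m} :=
  odflt set0 [pick S in fam | [forall S' in fam, (S' != S) ==>
      [exists x, lowest_in x ((S :\: S') :|: (S' :\: S)) && (x \in S)]]].

Definition union_prof {m n : nat} (P : 'I_n -> {set 'I_m}) : {set 'I_m} :=
  \bigcup_(i < n) P i.

Definition upd {m n : nat} (A : 'I_n -> {set 'I_m}) (i : 'I_n) (X : {set 'I_m})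
  : 'I_n -> {set 'I_m} := fun j => if j == i then X else A j.

Definition sl_score {m n : nat} (P : 'I_n -> {set 'I_m}) (S : {set 'I_m}) : rat :=
  \sum_(i < n) \sum_(l < #|P i :&: S|.+1) ((n%:R : rat) ^- l)%R.

Definition shortlist {m n : nat} (c : 'I_m -> nat) (B k : nat)
  (P : 'I_n -> {set 'I_m}) : {set 'I_m} :=
  let feas := fun S : {set 'I_m} =>
    (S \subset union_prof P) && (cost c S <= k * B) in
  tb_family [set S | feas S &&
    [forall S', feas S' ==> (sl_score P S' <= sl_score P S)%R]].

Definition napp {m n : nat} (A : 'I_n -> {set 'I_m}) (p : 'I_m) : nat :=
  #|[set i | p \in A i]|.

Definition app_order {m n : nat} (A : 'I_n -> {set 'I_m}) : rel 'I_m :=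
  fun p q => (napp A q < napp A p) || ((napp A p == napp A q) && (p <= q)%N).

Definition greedy_approval {m n : nat} (c : 'I_m -> nat) (B : nat)
  (Pc : {set 'I_m}) (A : 'I_n -> {set 'I_m}) : {set 'I_m} :=
  greedy c B (sort (app_order A) (enum Pc)).

Definition approval_max {m n : nat} (c : 'I_m -> nat) (B : nat)
  (Pc : {set 'I_m}) (A : 'I_n -> {set 'I_m}) : {set 'I_m} :=
  let feas := fun S : {set 'I_m} => (S \subset Pc) && (cost c S <= B) in
  tb_family [set S | feas S && [forall S', feas S' ==>
     (\sum_(p in S') napp A p <= \sum_(p in S) napp A p)]].

Inductive alloc_rule := GreedyApproval | ApprovalMax.

Definition alloc (rule : alloc_rule) {m n : nat} (c : 'I_m -> nat) (B : nat)
  (Pc : {set 'I_m}) (A : 'I_n -> {set 'I_m}) : {set 'I_m} :=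
  match rule with
  | GreedyApproval => greedy_approval c B Pc A
  | ApprovalMax => approval_max c B Pc A
  end.

(* Agent i's strict linear order: p |>_i q  iff  pref i p < pref i q. *)
Definition top_i {m n : nat} (c : 'I_m -> nat) (B : nat)
  (pref : 'I_n -> {perm 'I_m}) (i : 'I_n) (Pc : {set 'I_m}) : {set 'I_m} :=
  greedy c B (sort (fun p q => (pref i p <= pref i q)%N) (enum Pc)).

Definition top_prof {m n : nat} (c : 'I_m -> nat) (B : nat)
  (pref : 'I_n -> {perm 'I_m}) (Pc : {set 'I_m}) : 'I_n -> {set 'I_m} :=
  fun j => top_i c B pref j Pc.

Inductive pref_model := Overlap | CostModel.

Definition spref (mdl : pref_model) {m : nat} (c : 'I_m -> nat)
  (P A A' : {set 'I_m}) : bool :=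
  match mdl with
  | Overlap => #|A' :&: P| < #|A :&: P|
  | CostModel => cost c (A' :&: P) < cost c (A :&: P)
  end.

Definition best {m : nat} (sp : {set 'I_m} -> {set 'I_m} -> bool)
  (fam : {set {set 'I_m}}) : {set {set 'I_m}} :=
  [set X in fam | ~~ [exists Y in fam, sp Y X]].

Definition best_response (mdl : pref_model) (rule : alloc_rule) {m n : nat}
  (c : 'I_m -> nat) (B : nat) (pref : 'I_n -> {perm 'I_m})
  (Pc : {set 'I_m}) (A : 'I_n -> {set 'I_m}) (i : 'I_n) : {set 'I_m} :=
  tb_family (best (spref mdl c (top_i c B pref i Pc))
                  [set alloc rule c B Pc (upd A i A') | A' in powerset Pc]).

Definition Fstar (mdl : pref_model) (rule : alloc_rule) {m n : nat}
  (c : 'I_m -> nat) (B : nat) (pref : 'I_n -> {perm 'I_m})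
  (Pc : {set 'I_m}) (A : 'I_n -> {set 'I_m}) (i : 'I_n) : {set 'I_m} :=
  alloc rule c B Pc (upd A i (best_response mdl rule c B pref Pc A i)).

Definition successful_manip (mdl : pref_model) (rule : alloc_rule) (k : nat)
  {m n : nat} (c : 'I_m -> nat) (B : nat) (pref : 'I_n -> {perm 'I_m})
  (P : 'I_n -> {set 'I_m}) (i : 'I_n) (P' : {set 'I_m}) : bool :=
  let Pc := shortlist c B k P in
  let Pc' := shortlist c B k (upd P i P') in
  let Q := top_i c B pref i (Pc :|: Pc') in
  spref mdl c Q (Fstar mdl rule c B pref Pc' (top_prof c B pref Pc') i)
                (Fstar mdl rule c B pref Pc (top_prof c B pref Pc) i).

Definition U_FSSP_A (mdl : pref_model) (k : nat) (rule : alloc_rule) : Prop :=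
  forall (m n : nat) (c : 'I_m -> nat) (B : nat),
    0 < n -> 0 < B -> (forall p, 0 < c p) -> (forall p, c p <= B) ->
  forall (pref : 'I_n -> {perm 'I_m}) (C P : 'I_n -> {set 'I_m}),
    (forall j, P j \subset C j) ->
  forall (i : 'I_n) (P' : {set 'I_m}),
    P' \subset C i :|: union_prof P ->
    ~~ successful_manip mdl rule k c B pref
         (upd P i (top_i c B pref i (C i :|: union_prof P))) i P'.

From mathcomp Require Import all_boot all_order all_algebra all_fingroup.
From mathcomp Require Import zify.

Set Implicit Arguments.
Unset Strict Implicit.
Unset Printing Implicit Defensive.

Import Order.TTheory GRing.Theory Num.Theory.

(* Two counterexamples with three projects of cost 2, budget 3 (so every allocation is
   a single project) and two agents.  For k >= 2 all projects fit into the shortlist,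
   which is then the union of the submitted sets: agent a0 adds a project p2 that agent
   a1 prefers to the current winner p0, which draws a1's vote away from p0, and the
   resulting approval tie between p2 and a0's favourite p1 is broken in favour of p1.
   For k = 1 the shortlist is a single project and the shortlisting score of a
   singleton increases with its number of approvals, so the shortlist is chosen like an
   approval-maximising allocation: agent a0 abandons its favourite p1, which loses the
   three-way approval tie to p0 anyway, and instead supports p2, already proposed by a1
   and preferred by a0 to p0. *)

Section TieBreaking.

Variable m : nat.
Implicit Types (fam : {set {set 'I_m}}) (S X : {set 'I_m}).

Lemma lowest_inP (x : 'I_m) (D : {set 'I_m}) :
  reflect (x \in D /\ forall y, y \in D -> x <= y) (lowest_in x D).
Proof.
apply: (iffP andP) => -[xD xmin]; split=> //; first by move/forall_inP: xmin.
exact/forall_inP.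
Qed.

Lemma tb_familyE fam X : X \in fam ->
  (forall S, S \in fam -> S != X ->
     exists2 x, lowest_in x ((X :\: S) :|: (S :\: X)) & x \in X) ->
  tb_family fam = X.
Proof.
move=> Xfam Xwins; rewrite /tb_family.
case: pickP => [Y /andP [Yfam /forall_inP Ywins] | none] /=; last first.
  case/negP: (none X); rewrite Xfam; apply/forall_inP => S Sfam.
  apply/implyP => /(Xwins S Sfam) [x xlow xX].
  by apply/existsP; exists x; rewrite xlow.
apply/eqP; apply: contraT => YX.
have /existsP [x /andP [/lowest_inP [xD xmin] xY]] :=
  implyP (Ywins X Xfam) (contra_neq esym YX).
have [y /lowest_inP [yD ymin] yX] := Xwins Y Yfam YX.
have yx : y = x by apply/val_inj/eqP; rewrite eqn_leq ymin ?xmin // setUC.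
by subst y; move: xD; rewrite !inE xY yX.
Qed.

Lemma tb_family1 X : tb_family [set X] = X.
Proof. by apply: tb_familyE => [|S]; rewrite !inE // => ->. Qed.

Lemma tb_familyP fam : tb_family fam = set0 \/ tb_family fam \in fam.
Proof. by rewrite /tb_family; case: pickP => [S /andP [Sfam _] | _]; [right | left]. Qed.

End TieBreaking.

Section Costs.

Variables (m : nat) (c : 'I_m -> nat) (B : nat).

Lemma cost0 : cost c set0 = 0.
Proof. exact: big_set0. Qed.

Lemma cost1 p : cost c [set p] = c p.
Proof. exact: big_set1. Qed.

Lemma cost_setU1 p S : cost c (p |: S) <= cost c S + c p.
Proof.
case: (boolP (p \in S)) => pS; first by rewrite (setUidPr _) ?sub1set ?leq_addr.
by rewrite /cost big_setU1 //= addnC.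
Qed.

Lemma greedy_feasible s : cost c (greedy c B s) <= B.
Proof.
rewrite /greedy; have : cost c set0 <= B by rewrite cost0.
elim: s set0 => [|p s IH] S SB //=; apply: IH.
by case: ifP => // /(leq_trans (cost_setU1 p S)).
Qed.

Lemma alloc_feasible rule n Pc (A : 'I_n -> {set 'I_m}) :
  cost c (alloc rule c B Pc A) <= B.
Proof.
case: rule => /=; first exact: greedy_feasible.
rewrite /approval_max /=; set fam := [set S | _].
case: (tb_familyP fam) => [-> | ]; first by rewrite cost0.
by rewrite inE => /andP [/andP [_ ->]].
Qed.

Lemma setI_set1 (X : {set 'I_m}) q :
  X :&: [set q] = if q \in X then [set q] else set0.
Proof.
apply/setP => x; case qX: (q \in X); rewrite !inE;
  by case: eqP => [-> | _]; rewrite ?qX ?andbF ?andbT.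
Qed.

Lemma spref1 mdl q X Y : 0 < c q ->
  spref mdl c [set q] X Y = (q \in X) && (q \notin Y).
Proof.
move=> cq; case: mdl => /=; rewrite !setI_set1;
  by case: (q \in X); case: (q \in Y); rewrite ?cards1 ?cards0 ?cost1 ?cost0 ?ltnn.
Qed.

End Costs.

Section ApprovalOrder.

Variables (m n : nat) (A : 'I_n -> {set 'I_m}).

Lemma app_order_refl : reflexive (app_order A).
Proof. by move=> p; rewrite /app_order eqxx leqnn orbT. Qed.

Lemma app_order_total : total (app_order A).
Proof.
move=> p q; rewrite /app_order.
move: (napp A p) (napp A q) => a b; have := leq_total p q; lia.
Qed.

Lemma app_order_trans : transitive (app_order A).
Proof.
move=> y x z; rewrite /app_order.
move: (napp A x) (napp A y) (napp A z) => a b d; lia.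
Qed.

Lemma app_order_anti : antisymmetric (app_order A).
Proof.
move=> p q /andP []; rewrite /app_order => pq qp; apply: val_inj => /=.
by move: pq qp; move: (napp A p) (napp A q) => a b; lia.
Qed.

Lemma app_orderW p q : napp A q <= napp A p -> p <= q -> app_order A p q.
Proof. rewrite /app_order; move: (napp A p) (napp A q) => a b; lia. Qed.

Lemma app_order_lt p q : napp A q < napp A p -> app_order A p q.
Proof. by rewrite /app_order => ->. Qed.

Lemma app_order_napp p q : app_order A p q -> napp A q <= napp A p.
Proof. rewrite /app_order; move: (napp A p) (napp A q) => a b; lia. Qed.

Lemma app_order_tie p q :
  app_order A p q -> napp A p <= napp A q -> p <= q.
Proof. rewrite /app_order; move: (napp A p) (napp A q) => a b; lia. Qed.

End ApprovalOrder.

Section Scores.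

Variables (m n : nat) (P : 'I_n -> {set 'I_m}).
Implicit Types S : {set 'I_m}.

Definition agent_score (t : nat) : rat := (\sum_(l < t.+1) n%:R ^- l)%R.

Lemma sl_scoreE S : sl_score P S = (\sum_(i < n) agent_score #|P i :&: S|)%R.
Proof. by []. Qed.

Lemma agent_scoreS t : agent_score t.+1 = (agent_score t + n%:R ^- t.+1)%R.
Proof. exact: big_ord_recr. Qed.

Lemma agent_score_le : {homo agent_score : t t' / t <= t' >-> (t <= t')%R}.
Proof.
apply: homo_leq => [t | t1 t2 t3 | t]; [exact: lexx | exact: le_trans |].
by rewrite agent_scoreS lerDl invr_ge0 exprn_ge0 ?ler0n.
Qed.

Lemma agent_score_lt : 0 < n -> {homo agent_score : t t' / t < t' >-> (t < t')%R}.
Proof.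
move=> n_gt0; apply: homo_ltn => [t1 t2 t3 | t]; first exact: lt_trans.
by rewrite agent_scoreS ltrDl invr_gt0 exprn_gt0 ?ltr0n.
Qed.

Lemma sl_score_subset S (S' : {set 'I_m}) :
  S' \subset S -> (sl_score P S' <= sl_score P S)%R.
Proof.
move=> S'S; apply: ler_sum => i _; apply: agent_score_le.
exact/subset_leq_card/setIS.
Qed.

Lemma sl_score_proper S (S' : {set 'I_m}) :
  S \subset union_prof P -> S' \proper S -> (sl_score P S' < sl_score P S)%R.
Proof.
move=> SU /properP [S'S [p pS pS']].
have /bigcupP [i0 _ pPi0] := subsetP SU p pS.
rewrite !sl_scoreE (bigD1 i0) //= [X in (_ < X)%R](bigD1 i0) //=.
apply: ltr_leD.
  apply: agent_score_lt; first exact: leq_ltn_trans (leq0n _) (ltn_ord i0).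
  apply/proper_card/properP; split; first exact: setIS.
  by exists p; rewrite !inE ?pPi0 ?pS ?(negbTE pS').
by apply: ler_sum => i _; apply/agent_score_le/subset_leq_card/setIS.
Qed.

Lemma shortlist_all c B k : cost c (union_prof P) <= k * B ->
  shortlist c B k P = union_prof P.
Proof.
move=> UkB; rewrite /shortlist /= -[RHS]tb_family1; congr tb_family.
apply/setP => S; rewrite !inE; apply/idP/eqP => [|->].
  case/andP => /andP [SU _] /forallP /(_ (union_prof P)); rewrite subxx UkB /= => US.
  apply/eqP; apply: contraTT US => SnU.
  by rewrite -ltNge sl_score_proper // properEneq SnU.
rewrite subxx UkB /=; apply/forallP => S'; apply/implyP => /andP [S'U _].
exact: sl_score_subset.
Qed.

Lemma agent_score_le1 t : t <= 1 -> agent_score t = (1 + t%:R / n%:R)%R.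
Proof.
case: t => [|[|//]] _; rewrite /agent_score ?big_ord_recr big_ord0 /=.
  by rewrite expr0 invr1 !add0r mul0r addr0.
by rewrite expr0 invr1 expr1 add0r mul1r.
Qed.

Lemma sum_napp S : \sum_(p in S) napp P p = \sum_(i < n) #|P i :&: S|.
Proof.
have cardE (T : finType) (D : {set T}) : #|D| = \sum_x (x \in D).
  by rewrite -sum1_card big_mkcond; apply: eq_bigr => x _; case: (x \in D).
rewrite big_mkcond /= (eq_bigr (fun p => \sum_i ((p \in S) && (p \in P i)))).
  rewrite exchange_big; apply: eq_bigr => i _; rewrite cardE.
  by apply: eq_bigr => p _; rewrite !inE andbC.
move=> p _; case: (p \in S); last by rewrite big1.
by rewrite /napp cardE; apply: eq_bigr => i _; rewrite inE.
Qed.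

Lemma sl_score_le1 S : #|S| <= 1 ->
  sl_score P S = (n%:R + (\sum_(p in S) napp P p)%:R / n%:R)%R.
Proof.
move=> S_le1; rewrite sl_scoreE sum_napp natr_sum mulr_suml.
have PiS_le1 i : #|P i :&: S| <= 1.
  by apply: leq_trans S_le1; exact/subset_leq_card/subsetIr.
under eq_bigr => i _ do rewrite agent_score_le1 ?PiS_le1 //.
by rewrite big_split /= sumr_const card_ord.
Qed.

End Scores.

Section UnitBudget.

Variables (m : nat) (c : 'I_m -> nat) (B : nat).
Hypothesis unit_budget : forall p q, c p <= B < c p + c q.

Let afford p : c p <= B.
Proof. by case/andP: (unit_budget p p). Qed.

Let no_pair p q : B < c p + c q.
Proof. by case/andP: (unit_budget p q). Qed.

Lemma cost_gt0 p : 0 < c p.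
Proof. by have := no_pair p p; have := afford p; lia. Qed.

Lemma card_feasible (S : {set 'I_m}) : cost c S <= B -> #|S| <= 1.
Proof.
move=> SB; rewrite leqNgt; apply/negP => /card_gt1P [p [q [pS qS pq]]].
have : c p + c q <= cost c S.
  rewrite /cost (bigD1 p) //= leq_add2l (bigD1 q) ?leq_addr //=.
  by rewrite qS eq_sym.
by have := no_pair p q; lia.
Qed.

Lemma feasible_small (S : {set 'I_m}) :
  cost c S <= B -> S = set0 \/ exists q, S = [set q].
Proof.
move/card_feasible; rewrite leq_eqVlt ltnS leqn0.
by case/orP => [/cards1P [q ->] | /eqP /cards0_eq ->]; [right; exists q | left].
Qed.

Lemma greedy_cons p s : greedy c B (p :: s) = [set p].
Proof.
rewrite /greedy /= cost0 afford setU0.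
by elim: s => //= q s; rewrite cost1 leqNgt no_pair.
Qed.

Lemma greedy_sort_min (r : rel 'I_m) (X : {set 'I_m}) q :
  total r -> transitive r -> antisymmetric r ->
  q \in X -> (forall z, z \in X -> r q z) ->
  greedy c B (sort r (enum X)) = [set q].
Proof.
move=> r_total r_trans r_anti qX qmin.
have : q \in sort r (enum X) by rewrite mem_sort mem_enum.
have := sort_sorted r_total (enum X).
case E: (sort r (enum X)) => [//|h s] hs_sorted q_hs; rewrite greedy_cons.
have hX : h \in X by rewrite -mem_enum -(mem_sort r) E mem_head.
suff hq : r h q by rewrite (r_anti h q) ?hq ?qmin.
move: q_hs; rewrite inE => /predU1P [-> | q_s]; first by case/orP: (r_total h h).
exact: (allP (order_path_min r_trans hs_sorted)).
Qed.

Lemma top_first n (pref : 'I_n -> {perm 'I_m}) i (X : {set 'I_m}) q :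
  q \in X -> (forall z, z \in X -> pref i q <= pref i z) ->
  top_i c B pref i X = [set q].
Proof.
move=> qX qmin; apply: greedy_sort_min => //.
- by move=> x y; exact: leq_total.
- by move=> y x z; exact: leq_trans.
- move=> x y xy; apply: (perm_inj (s := pref i)).
  by apply/val_inj/eqP; rewrite eqn_leq.
Qed.

Section FirstInApprovalOrder.

Variables (n : nat) (Pc : {set 'I_m}) (A : 'I_n -> {set 'I_m}) (q : 'I_m).
Hypothesis q_Pc : q \in Pc.
Hypothesis q_first : forall z, z \in Pc -> app_order A q z.

Lemma greedy_approval_first : greedy_approval c B Pc A = [set q].
Proof.
apply: greedy_sort_min => //;
  [exact: app_order_total | exact: app_order_trans | exact: app_order_anti].
Qed.

Lemma approval_max_first : approval_max c B Pc A = [set q].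
Proof.
rewrite /approval_max /=; apply: tb_familyE => [|S].
  rewrite inE sub1set q_Pc cost1 afford big_set1 /=; apply/forallP => S'.
  apply/implyP => /andP [S'P /feasible_small [-> | [z Sz]]]; first by rewrite big_set0.
  move: S'P; rewrite Sz sub1set big_set1 => zP.
  exact/app_order_napp/q_first.
rewrite inE => /andP [/andP [SP /feasible_small S_small] /forallP /(_ [set q])].
rewrite sub1set q_Pc cost1 afford big_set1 /= => qS Sq.
exists q; last exact: set11.
apply/lowest_inP; case: S_small SP Sq qS => [-> | [z ->]] SP Sq qS.
  by split=> [|y]; rewrite !inE ?eqxx ?andbF ?orbF //= => /eqP ->.
rewrite big_set1 in qS; have zq : z != q by apply: contraNneq Sq => ->.
split=> [|y]; first by rewrite !inE eqxx eq_sym zq.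
rewrite !inE => /orP [/andP [_ /eqP -> //] | /andP [_ /eqP ->]].
by apply: app_order_tie qS; apply: q_first; rewrite -sub1set.
Qed.

Lemma alloc_first rule : alloc rule c B Pc A = [set q].
Proof. by case: rule; [exact: greedy_approval_first | exact: approval_max_first]. Qed.

End FirstInApprovalOrder.

Lemma alloc1 rule n p (A : 'I_n -> {set 'I_m}) : alloc rule c B [set p] A = [set p].
Proof. by apply: alloc_first => [|z /set1P ->]; rewrite ?set11 ?app_order_refl. Qed.

Lemma best_response_top mdl rule n (pref : 'I_n -> {perm 'I_m})
    (Pc : {set 'I_m}) (A : 'I_n -> {set 'I_m}) i q :
  q \in Pc -> top_i c B pref i Pc = [set q] ->
  alloc rule c B Pc (upd A i [set q]) = [set q] ->
  best_response mdl rule c B pref Pc A i = [set q].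
Proof.
move=> q_Pc top_q q_wins; rewrite /best_response top_q.
set fam := [set alloc rule c B Pc (upd A i A') | A' in powerset Pc].
have q_fam : [set q] \in fam.
  by apply/imsetP; exists [set q]; rewrite ?powersetE ?sub1set ?q_wins.
rewrite -[RHS]tb_family1; congr tb_family; apply/setP => Y; rewrite !inE.
apply/andP/eqP => [[Y_fam no_better] | ->].
  apply/eqP; apply: contraNT no_better => Yq; apply/existsP; exists [set q].
  rewrite q_fam spref1 ?cost_gt0 ?set11 //=.
  have : cost c Y <= B by case/imsetP: Y_fam => A' _ ->; exact: alloc_feasible.
  case/feasible_small => [Y0 | [z Yz]]; first by rewrite Y0 inE.
  by move: Yq; rewrite Yz inE; apply: contraNneq => ->.
split=> //; apply/existsP => -[Y' /andP [_]].
by rewrite spref1 ?cost_gt0 ?set11 ?andbF.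
Qed.

Lemma shortlist1 n (P : 'I_n -> {set 'I_m}) : 0 < n ->
  shortlist c B 1 P = approval_max c B (union_prof P) P.
Proof.
move=> n_gt0; rewrite /shortlist /approval_max /= mul1n; congr tb_family.
have score_leE S S' : cost c S <= B -> cost c S' <= B ->
    (sl_score P S' <= sl_score P S)%R =
    (\sum_(p in S') napp P p <= \sum_(p in S) napp P p).
  move=> /card_feasible S_le1 /card_feasible S'_le1.
  by rewrite !sl_score_le1 // lerD2l ler_pM2r ?invr_gt0 ?ltr0n // ler_nat.
apply/setP => S; rewrite !inE.
case: (S \subset _); case SB: (cost c S <= B) => //=.
apply: eq_forallb => S'.
by case: (S' \subset _); case S'B: (cost c S' <= B); rewrite //= score_leE.
Qed.

End UnitBudget.

Section TwoAgents.

Variable m : nat.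

Lemma upd_id n (A : 'I_n -> {set 'I_m}) i X : upd A i X i = X.
Proof. by rewrite /upd eqxx. Qed.

Lemma upd_neq n (A : 'I_n -> {set 'I_m}) i j X : j != i -> upd A i X j = A j.
Proof. by rewrite /upd => /negbTE ->. Qed.

Definition a0 : 'I_2 := ord0.
Definition a1 : 'I_2 := lift ord0 ord0.

Definition prof2 (X Y : {set 'I_m}) : 'I_2 -> {set 'I_m} :=
  fun j => if j == a0 then X else Y.

Lemma prof2_a1 (X Y : {set 'I_m}) : prof2 X Y a1 = Y.
Proof. by []. Qed.

Lemma prof2_subset (X Y X' Y' : {set 'I_m}) : X \subset X' -> Y \subset Y' ->
  forall j, prof2 X Y j \subset prof2 X' Y' j.
Proof. by move=> XX' YY' j; rewrite /prof2; case: (j == a0). Qed.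

Lemma union_prof2 (A : 'I_2 -> {set 'I_m}) : union_prof A = A a0 :|: A a1.
Proof. by rewrite /union_prof big_ord_recl big_ord1. Qed.

Lemma napp2 (A : 'I_2 -> {set 'I_m}) p : napp A p = (p \in A a0) + (p \in A a1).
Proof.
rewrite /napp -sum1_card big_mkcond big_ord_recl big_ord1 /= !inE.
by case: (p \in A a0); case: (p \in A a1).
Qed.

End TwoAgents.

Definition p0 : 'I_3 := @Ordinal 3 0 isT.
Definition p1 : 'I_3 := @Ordinal 3 1 isT.
Definition p2 : 'I_3 := @Ordinal 3 2 isT.

Definition c2 : 'I_3 -> nat := fun _ => 2.

Lemma c2_unit_budget p q : c2 p <= 3 < c2 p + c2 q.
Proof. by []. Qed.

Definition shift (d : nat) (p : 'I_3) : 'I_3 := Ordinal (ltn_pmod (p + d) (isT : 0 < 3)).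

Lemma shift_inj d : injective (shift d).
Proof.
move=> p q /(congr1 val) /= /eqP; rewrite eqn_modDr !modn_small // => /eqP.
exact: val_inj.
Qed.

(* Agent a0 ranks p1 > p2 > p0 and agent a1 ranks p2 > p0 > p1. *)
Definition pref2 (j : 'I_2) : {perm 'I_3} :=
  perm (@shift_inj (if j == a0 then 2 else 1)).

Lemma pref2E j p : pref2 j p = (p + (if j == a0 then 2 else 1)) %% 3 :> nat.
Proof. by rewrite permE. Qed.

Lemma top_a0 (X : {set 'I_3}) : p1 \in X -> top_i c2 3 pref2 a0 X = [set p1].
Proof. by move=> p1X; apply: (top_first c2_unit_budget) => // z _; rewrite pref2E. Qed.

Lemma top_a1 (X : {set 'I_3}) : p2 \in X -> top_i c2 3 pref2 a1 X = [set p2].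
Proof. by move=> p2X; apply: (top_first c2_unit_budget) => // z _; rewrite pref2E. Qed.

Lemma manipulation_refutes_U_FSSP_A mdl rule k (C P : 'I_2 -> {set 'I_3})
    (P' : {set 'I_3}) :
  (forall j, P j \subset C j) -> P' \subset C a0 :|: union_prof P ->
  successful_manip mdl rule k c2 3 pref2
    (upd P a0 (top_i c2 3 pref2 a0 (C a0 :|: union_prof P))) a0 P' ->
  ~ U_FSSP_A mdl k rule.
Proof.
move=> aware avail manip /(_ 3 2 c2 3 isT isT (fun _ => isT) (fun _ => isT) pref2 C P).
by move/(_ aware a0 P' avail)/negP.
Qed.

Lemma shortlist_k_gt1 k (P : 'I_2 -> {set 'I_3}) : 1 < k ->
  shortlist c2 3 k P = union_prof P.
Proof.
move=> k_gt1; apply: shortlist_all; rewrite /cost sum_nat_const.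
have : #|union_prof P| <= 3 by apply: leq_trans (max_card _) _; rewrite card_ord.
nia.
Qed.

Lemma outcome_truthful_k_gt1 mdl rule :
  Fstar mdl rule c2 3 pref2 [set p1; p0] (top_prof c2 3 pref2 [set p1; p0]) a0 = [set p0].
Proof.
have top1 : top_i c2 3 pref2 a1 [set p1; p0] = [set p0].
  apply: (top_first c2_unit_budget) => [|z]; rewrite !inE ?eqxx ?orbT //.
  by case/orP => /eqP ->; rewrite !pref2E.
apply: (alloc_first c2_unit_budget) => [|z]; rewrite !inE ?eqxx ?orbT //.
case/orP => /eqP ->; last exact: app_order_refl.
apply: app_orderW => //; rewrite !napp2 upd_id upd_neq // /top_prof top1 !inE /=.
by case: (p1 \in _); case: (p0 \in _).
Qed.

Lemma outcome_manip_k_gt1 mdl rule :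
  Fstar mdl rule c2 3 pref2 [set p1; p2; p0] (top_prof c2 3 pref2 [set p1; p2; p0]) a0
  = [set p1].
Proof.
set Pc := [set p1; p2; p0].
have p1_Pc : p1 \in Pc by rewrite !inE eqxx.
have napp_a0p1 z : napp (upd (top_prof c2 3 pref2 Pc) a0 [set p1]) z =
    (z \in [set p1]) + (z \in [set p2]).
  by rewrite napp2 upd_id upd_neq // /top_prof top_a1 // !inE eqxx orbT.
have p1_wins : alloc rule c2 3 Pc (upd (top_prof c2 3 pref2 Pc) a0 [set p1]) = [set p1].
  apply: (alloc_first c2_unit_budget) => // z.
  rewrite !inE => /orP [/orP [] | ] /eqP ->; first exact: app_order_refl.
    by apply: app_orderW; rewrite // !napp_a0p1 !inE.
  by apply: app_order_lt; rewrite !napp_a0p1 !inE.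
by rewrite /Fstar (best_response_top c2_unit_budget mdl (q := p1)) ?top_a0.
Qed.

Lemma manipulable_k_gt1 mdl rule k : 1 < k -> ~ U_FSSP_A mdl k rule.
Proof.
move=> k_gt1; apply: (@manipulation_refutes_U_FSSP_A _ _ _
  (prof2 [set p1; p2] [set p0]) (prof2 set0 [set p0]) [set p1; p2]).
- exact: prof2_subset (sub0set _) (subxx _).
- exact: subsetUl.
rewrite top_a0 ?inE ?eqxx // /successful_manip !shortlist_k_gt1 //.
rewrite !union_prof2 !upd_id !upd_neq // prof2_a1.
by rewrite outcome_truthful_k_gt1 outcome_manip_k_gt1 top_a0 ?spref1 ?inE ?eqxx.
Qed.

Lemma shortlist_truthful_k1 :
  shortlist c2 3 1 (upd (prof2 set0 [set p0; p2]) a0 [set p1]) = [set p0].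
Proof.
rewrite (shortlist1 c2_unit_budget) //.
apply: (approval_max_first c2_unit_budget) => [|z];
  rewrite union_prof2 upd_id upd_neq // prof2_a1 !inE ?eqxx ?orbT //.
by case/orP => [| /orP []] /eqP ->;
  apply: app_orderW; rewrite // !napp2 upd_id upd_neq // prof2_a1 !inE.
Qed.

Lemma shortlist_manip_k1 :
  shortlist c2 3 1 (upd (upd (prof2 set0 [set p0; p2]) a0 [set p1]) a0 [set p2])
  = [set p2].
Proof.
rewrite (shortlist1 c2_unit_budget) //.
apply: (approval_max_first c2_unit_budget) => [|z];
  rewrite union_prof2 upd_id !upd_neq // prof2_a1 !inE ?eqxx //.
case/orP => [| /orP []] /eqP ->; try exact: app_order_refl.
by apply: app_order_lt; rewrite !napp2 upd_id !upd_neq // prof2_a1 !inE.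
Qed.

Lemma manipulable_k1 mdl rule : ~ U_FSSP_A mdl 1 rule.
Proof.
apply: (@manipulation_refutes_U_FSSP_A _ _ _
  (prof2 [set p1] [set p0; p2]) (prof2 set0 [set p0; p2]) [set p2]).
- exact: prof2_subset (sub0set _) (subxx _).
- by rewrite sub1set union_prof2 !inE eqxx !orbT.
rewrite top_a0 ?inE ?eqxx // /successful_manip shortlist_truthful_k1 shortlist_manip_k1.
have top_p2 : top_i c2 3 pref2 a0 ([set p0] :|: [set p2]) = [set p2].
  apply: (top_first c2_unit_budget) => [|z]; rewrite !inE ?eqxx ?orbT //.
  by case/orP => /eqP ->; rewrite !pref2E.
by rewrite /Fstar !(alloc1 c2_unit_budget) top_p2 spref1 // !inE.
Qed.

Theorem fact2 (mdl : pref_model) (rule : alloc_rule) (k : nat) (hk : 0 < k) :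
  ~ U_FSSP_A mdl k rule.
Proof.
case: k hk => [//|[_ | k _]]; first exact: manipulable_k1.
exact: manipulable_k_gt1.
Qed.
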